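(* Let $p$ be prime and let $k\ge2$, $\ell\ge1$ be integers. Let $c_{i_1},\dots,c_{i_{k-1}}$ be $k-1$ pairwise distinct codewords of a $p$-ary prefix-free code with lengths $\ell_{i_1}\le\cdots\le\ell_{i_{k-1}}$, let $y_{i_m}=\sum_{t=0}^{\ell_{i_m}-1}c_{i_m,t}x^t\in F_p[x]$, and let $L_{i_m}=(\ell_{i_m}-1)(k-1)+\ell$. Let $r_0,\dots,r_{k-2}$ be independent random polynomials, each uniformly distributed over the polynomials in $F_p[x]$ of degree less than $L_{i_{k-1}}$. For a secret $s\in F_p[x]$ of degree less than $\ell$ define the random shares $$Z^{(s)}_{i_m}\equiv\sum_{j=0}^{k-2}r_j\,y_{i_m}^{\,j}+s\,y_{i_m}^{\,k-1}\pmod{x^{L_{i_m}}},\qquad 1\le m\le k-1,$$ each taken as a polynomial of degree less than $L_{i_m}$. Then for any two secrets $s_0,s_1$ of degree less than $\ell$, the random tuples $(Z^{(s_0)}_{i_1},\dots,Z^{(s_0)}_{i_{k-1}})$ and $(Z^{(s_1)}_{i_1},\dots,Z^{(s_1)}_{i_{k-1}})$ have the same probability distribution.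
   Context: A $p$-ary prefix-free code is a set of finite strings over the alphabet $F_p$ none of which is a prefix of another. $F_p[x]$ is the polynomial ring over the finite field $F_p$. *)

From HB Require Import structures.
From mathcomp Require Import all_boot all_order all_algebra.
Set Implicit Arguments. Unset Strict Implicit. Unset Printing Implicit Defensive.
Import GRing.Theory.
Local Open Scope ring_scope.

Definition prefix_free (p : nat) (C : seq 'F_p -> Prop) : Prop :=
  forall u v : seq 'F_p, C u -> C v -> prefix u v -> u = v.

Definition cw_poly (p : nat) (c : seq 'F_p) : {poly 'F_p} := Poly c.

Definition share_len (k ell len : nat) : nat := ((len - 1) * (k - 1) + ell)%N.

(* Sample space: k-1 random polynomials r_0..r_{k-2}, each of degree < Lmax,
   encoded by their coefficient tuples (coefficient of x^t at position t). *)
Definition rand_space (p k Lmax : nat) := {ffun 'I_k.-1 -> Lmax.-tuple 'F_p}.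

Definition vec_poly (p n : nat) (v : n.-tuple 'F_p) : {poly 'F_p} :=
  Poly (tval v).

Definition share (p k ell Lmax : nat) (r : rand_space p k Lmax)
  (s : {poly 'F_p}) (c : seq 'F_p) : {poly 'F_p} :=
  let y := cw_poly c in
  (\sum_(j < k.-1) vec_poly (r j) * y ^+ j + s * y ^+ k.-1)
    %% 'X^(share_len k ell (size c)).

Definition shares (p k ell Lmax : nat) (cs : seq (seq 'F_p))
  (s : {poly 'F_p}) (r : rand_space p k Lmax) : seq {poly 'F_p} :=
  [seq share ell r s c | c <- cs].

Definition share_prob (p k ell Lmax : nat) (cs : seq (seq 'F_p))
  (s : {poly 'F_p}) (z : seq {poly 'F_p}) : rat :=
  (#|[set r : rand_space p k Lmax | shares ell cs s r == z]|%:R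
     / #|[set: rand_space p k Lmax]|%:R)%R.

(* Let P := \prod_c ('X - y_c%:P), a monic polynomial of degree k - 1 with
   coefficients in F_p[x] vanishing at every codeword polynomial y_c.  At each
   y_c we have \sum_(j < k-1) P_j y_c^j = - y_c^(k-1), so translating the
   randomness r_j by (s1 - s0) P_j makes the s1-shares equal to the s0-shares
   of the untranslated randomness, already before the reduction mod x^L.
   Since deg P_j <= (k - 1)(l_max - 1), the translated r_j still have degree
   below L_max; translation is injective, so each s0-fibre injects into the
   s1-fibre of the same share tuple, and by symmetry the fibres have equal
   size. *)
From HB Require Import structures.
From mathcomp Require Import all_boot all_order all_algebra.
From mathcomp Require Import zify ring.
Local Open Scope ring_scope.
Import GRing.Theory.

Lemma sorted_leq_last (s : seq nat) (x0 : nat) :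
  sorted leq s -> {in s, forall x, (x <= last x0 s)%N}.
Proof.
case/lastP: s => [//|s a]; rewrite last_rcons -rev_sorted rev_rcons /=.
move=> /(order_path_min (fun _ _ _ h1 h2 => leq_trans h2 h1)) /allP le_a x.
by rewrite mem_rcons inE => /predU1P [->|s_x] //; apply: le_a; rewrite mem_rev.
Qed.

Lemma size_coef_prod_XsubC (R : nzRingType) (M : nat) (s : seq {poly R}) :
  (forall y, y \in s -> (size y <= M.+1)%N) ->
  forall j, leq (size (\prod_(y <- s) ('X - y%:P))`_j) (size s * M).+1.
Proof.
elim: s => [|a s IH] le_s j.
  by rewrite big_nil coef1; case: (j == 0)%N; rewrite ?size_poly1 ?size_poly0.
have le_a : (size a <= M.+1)%N by rewrite le_s ?mem_head.
have {}IH := IH (fun y ys => le_s y (mem_behead (ys : y \in behead (a :: s)))).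
rewrite big_cons mulrBl coefB coefXM coefCM.
apply: leq_trans (size_polyD _ _) _; rewrite size_polyN geq_max /=.
apply/andP; split.
  by case: (j == 0)%N; rewrite ?size_poly0 // (leq_trans (IH _)) // mulSn; lia.
apply: leq_trans (size_polyMleq _ _) _.
move: (IH j) le_a; rewrite mulSn; move: (size a) (size _) => x y; lia.
Qed.

Lemma horner_sum_shift_root (R : comNzRingType) (n : nat) (P : {poly R})
  (y d s : R) (a : 'I_n -> R) :
  P \is monic -> size P = n.+1 -> root P y ->
  \sum_(j < n) (a j + d * P`_j) * y ^+ j + s * y ^+ n =
  \sum_(j < n) a j * y ^+ j + (s - d) * y ^+ n.
Proof.
move=> monP sizeP /rootP; rewrite horner_coef sizeP big_ord_recr /=.
have -> : P`_n = 1 by move/monicP: monP; rewrite lead_coefE sizeP.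
rewrite mul1r => /eqP; rewrite addr_eq0 => /eqP sum_P.
under eq_bigr => j _ do rewrite mulrDl -mulrA.
by rewrite big_split /= -mulr_sumr sum_P; ring.
Qed.

Definition tshift {F : nzRingType} {n : nat} (q : {poly F}) (t : n.-tuple F) :
  n.-tuple F := [tuple tnth t i + q`_i | i < n].

Lemma tshift_inj (F : nzRingType) (n : nat) (q : {poly F}) :
  injective (@tshift F n q).
Proof.
move=> t t' eq_t; apply: eq_from_tnth => i.
by move: (congr1 (fun u => tnth u i) eq_t); rewrite /= !tnth_mktuple => /addIr.
Qed.

Lemma vec_poly_tshift (p n : nat) (q : {poly 'F_p}) (t : n.-tuple 'F_p) :
  (size q <= n)%N -> vec_poly (tshift q t) = vec_poly t + q.
Proof.
move=> le_q; apply/polyP => i; rewrite coefD !coef_Poly.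
have [lt_i|le_i] := ltnP i n.
  by rewrite -[i]/(nat_of_ord (Ordinal lt_i)) nth_mktuple (tnth_nth 0).
by rewrite !nth_default ?size_tuple ?addr0 // (leq_trans le_q le_i).
Qed.

Section ShareFibres.

Variables (p k ell : nat) (cs : seq (seq 'F_p)) (s0 s1 : {poly 'F_p}).
Hypotheses (k_ge2 : (2 <= k)%N) (size_cs : size cs = k.-1).
Hypothesis sorted_cs : sorted leq [seq size c | c <- cs].
Hypotheses (le_s0 : (size s0 <= ell)%N) (le_s1 : (size s1 <= ell)%N).

Let Lmax := share_len k ell (size (last [::] cs)).
Let M := (size (last [::] cs)).-1.

Definition codeword_annihilator : {poly {poly 'F_p}} :=
  \prod_(y <- map (@cw_poly p) cs) ('X - y%:P).

Local Notation P := codeword_annihilator.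

Lemma size_codeword_annihilator : size P = k.
Proof. by rewrite size_prod_XsubC size_map size_cs; lia. Qed.

Lemma root_codeword_annihilator c : c \in cs -> root P (cw_poly c).
Proof. by move=> cs_c; rewrite root_prod_XsubC map_f. Qed.

Lemma size_coef_codeword_annihilator j : leq (size P`_j) (k.-1 * M).+1.
Proof.
rewrite -size_cs -(size_map (@cw_poly p)).
apply: size_coef_prod_XsubC => _ /mapP [c cs_c ->].
rewrite (leq_trans (size_Poly _)) // (leq_trans _ (leqSpred _)) //.
by rewrite -(last_map size) (sorted_leq_last _ _ sorted_cs) ?map_f.
Qed.

Definition secret_shift (j : 'I_k.-1) : {poly 'F_p} := (s1 - s0) * P`_j.

Lemma size_secret_shift j : (size (secret_shift j) <= Lmax)%N.
Proof.
have le_ds : (size (s1 - s0)%R <= ell)%N.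
  by rewrite (leq_trans (size_polyD _ _)) // size_polyN geq_max le_s0 le_s1.
apply: leq_trans (size_polyMleq _ _) _.
rewrite /Lmax /share_len !subn1 -/M mulnC -subn1 leq_subLR add1n -addSn addnC.
by rewrite leq_add ?size_coef_codeword_annihilator.
Qed.

Definition rand_shift (r : rand_space p k Lmax) : rand_space p k Lmax :=
  [ffun j => tshift (secret_shift j) (r j)].

Lemma rand_shift_inj : injective rand_shift.
Proof.
move=> r r' /ffunP eq_f; apply/ffunP => j.
by apply: (@tshift_inj _ _ (secret_shift j)); move: (eq_f j); rewrite !ffunE.
Qed.

Lemma shares_rand_shift r : shares ell cs s1 (rand_shift r) = shares ell cs s0 r.
Proof.
apply/eq_in_map => c cs_c; rewrite /share /=; congr (_ %% _).
under eq_bigr => j _ do rewrite ffunE vec_poly_tshift ?size_secret_shift //.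
rewrite horner_sum_shift_root ?subKr ?monic_prod_XsubC //.
  by rewrite size_codeword_annihilator (prednK (ltnW k_ge2)).
exact: root_codeword_annihilator.
Qed.

Lemma card_share_fibre_le z :
  (#|[set r : rand_space p k Lmax | shares ell cs s0 r == z]| <=
   #|[set r : rand_space p k Lmax | shares ell cs s1 r == z]|)%N.
Proof.
rewrite -(card_imset _ rand_shift_inj); apply/subset_leq_card/subsetP.
by move=> _ /imsetP [r + ->]; rewrite !inE shares_rand_shift.
Qed.

End ShareFibres.

Theorem mainTheorem8 (p k ell : nat) (C : seq 'F_p -> Prop)
  (cs : seq (seq 'F_p)) (s0 s1 : {poly 'F_p}) :
  prime p -> (2 <= k)%N -> (1 <= ell)%N ->
  prefix_free C ->
  size cs = k.-1 -> uniq cs -> (forall c, c \in cs -> C c) ->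
  (forall c, c \in cs -> 0 < size c)%N ->
  sorted leq [seq size c | c <- cs] ->
  (size s0 <= ell)%N -> (size s1 <= ell)%N ->
  let Lmax := share_len k ell (size (last [::] cs)) in
  forall z : seq {poly 'F_p},
    share_prob k ell Lmax cs s0 z = share_prob k ell Lmax cs s1 z.
Proof.
move=> _ k_ge2 _ _ size_cs _ _ _ sorted_cs le_s0 le_s1 Lmax z.
rewrite /share_prob; congr (_ %:R / _).
by apply/eqP; rewrite eqn_leq !card_share_fibre_le.
Qed.
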